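(* For every integer $n\ge1$, $\operatorname{num}_{\mathcal O}(n,-1)=o(n!)$, where $o(M)$ denotes the largest odd divisor of a positive integer $M$.
   Context: An odd partition of $n$ is a partition of $n$ (finite nonincreasing sequence of positive integers summing to $n$) all of whose parts are odd; $\mathcal O(n)$ is the set of odd partitions of $n$, and $m_\lambda(i)$ the number of parts of $\lambda$ equal to $i$. For $\lambda\in\mathcal O(n)$ let $h_{\mathcal O,\lambda}(x)=\prod_{i\ge1,\ i\text{ odd}}(1+x^i)^{\lfloor n/i\rfloor-m_\lambda(i)}$. Let $G_{\mathcal O}(n,x)=\gcd\{h_{\mathcal O,\lambda}(x):\lambda\in\mathcal O(n)\}$ in $\mathbb{Z}[x]$ (normalized with positive leading coefficient), and $\operatorname{num}_{\mathcal O}(n,x)=\frac{1}{G_{\mathcal O}(n,x)}\sum_{\lambda\in\mathcal O(n)}h_{\mathcal O,\lambda}(x)\in\mathbb{Z}[x]$. *)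

From HB Require Import structures.
From mathcomp Require Import all_boot all_order all_algebra.
From Stdlib Require Import ClassicalEpsilon.
Set Implicit Arguments. Unset Strict Implicit. Unset Printing Implicit Defensive.
Import Order.TTheory GRing.Theory Num.Theory.

Definition is_odd_partition (n : nat) (s : seq nat) : bool :=
  [&& sorted geq s, all odd s & sumn s == n].

Fixpoint bseqs (k m : nat) : seq (seq nat) :=
  match k with
  | 0 => [:: [::]]
  | k'.+1 => [::] :: [seq x :: s | x <- iota 0 m.+1, s <- bseqs k' m]
  end.

(* The set O(n) of odd partitions of n, as a duplicate-free list.
   (Every partition of n has length <= n and parts <= n.) *)
Definition odd_partitions (n : nat) : seq (seq nat) :=
  [seq s <- undup (bseqs n n) | is_odd_partition n s].

Local Open Scope ring_scope.

(* h_{O,lambda}(x) = prod_{i odd} (1 + x^i)^(floor(n/i) - m_lambda(i));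
   factors with i > n are 1 and are omitted. *)
Definition h_O (n : nat) (l : seq nat) : {poly int} :=
  \prod_(i < n.+1 | odd i) (1 + 'X^i) ^+ (n %/ i - count_mem (i : nat) l)%N.

Definition dvdZX (g p : {poly int}) : Prop := exists q : {poly int}, p = q * g.

Definition is_G_O (n : nat) (g : {poly int}) : Prop :=
  [/\ (forall l, l \in odd_partitions n -> dvdZX g (h_O n l)),
      (forall d : {poly int},
          (forall l, l \in odd_partitions n -> dvdZX d (h_O n l)) -> dvdZX d g)
    & 0 < lead_coef g].

Definition G_O (n : nat) : {poly int} := epsilon (inhabits 0) (is_G_O n).

Definition sum_h_O (n : nat) : {poly int} :=
  \sum_(l <- odd_partitions n) h_O n l.

Definition num_O (n : nat) : {poly int} :=
  epsilon (inhabits 0) (fun q : {poly int} => sum_h_O n = q * G_O n).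

Definition odd_part (M : nat) : nat :=
  (\max_(d < M.+1 | odd d && (d %| M)) d)%N.

(* For odd i, 1 + X^i = prod_(d | i) Phi_(2d)(X).  Hence every h_{O,lambda} is a
   product of powers of the pairwise coprime Phi_(2d), d odd <= n, the exponent
   of Phi_(2d) being sum_(i odd, d | i) floor(n/i) minus the number of parts of
   lambda divisible by d.  That number is at most floor(n/d), with equality for
   lambda = d^(floor(n/d)) 1^(n mod d); so G_O is the product of the
   Phi_(2d)^(sum_(i odd, d | i) floor(n/i) - floor(n/d)) (that every common
   divisor divides it is checked on the multiplicities of complex roots), and
   num_O(n,x) = sum_lambda prod_d Phi_(2d)^(floor(n/d) - #{parts divisible by d}).
   At x = -1 the factor Phi_2 = 1 + X kills every term but lambda = 1^n, which
   contributes prod_(d odd > 1) Phi_(2d)(-1)^(floor(n/d)).  Since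
   prod_(1 < d | m) Phi_(2d)(-1) = m for odd m (evaluate (1 + X^m)/(1 + X) at -1),
   regrouping by multiples turns this into prod_(m <= n) (odd part of m), the odd
   part of n!. *)

From mathcomp Require Import all_boot all_order all_algebra all_field.
From Stdlib Require Import ClassicalEpsilon.
From mathcomp Require Import zify ring.
Import Order.TTheory GRing.Theory Num.Theory.
Set Implicit Arguments. Unset Strict Implicit. Unset Printing Implicit Defensive.

Lemma big_divisors_ord (R : Type) (idx : R) (op : Monoid.com_law idx)
    (P : pred nat) (F : nat -> R) i N : 0 < i < N ->
  \big[op/idx]_(d <- divisors i | P d) F d =
  \big[op/idx]_(d < N | P d && (d %| i)) F d.
Proof.
case/andP=> i_gt0 iN; rewrite -(big_mkord (fun d => P d && (d %| i))).
rewrite [RHS](eq_bigl (fun d => (d %| i) && P d)) => [|d]; last by rewrite andbC.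
rewrite -big_filter_cond; apply: perm_big.
apply: uniq_perm; rewrite ?divisors_uniq ?filter_uniq ?iota_uniq // => d.
rewrite -dvdn_divisors // mem_filter mem_iota /=.
by case dvd: (d %| i); rewrite ?andbF //; have := dvdn_leq i_gt0 dvd; lia.
Qed.

Lemma perm_divisors_double i : odd i ->
  perm_eq (divisors i.*2) ([seq d.*2 | d <- divisors i] ++ divisors i).
Proof.
move=> oi; have i_gt0 : 0 < i by case: i oi.
have odd_dvd d : d %| i -> odd d by move/dvdn_odd; apply.
apply: uniq_perm; rewrite ?divisors_uniq //.
  rewrite cat_uniq map_inj_uniq ?divisors_uniq //=; last exact: double_inj.
  rewrite andbT; apply/hasPn => d; rewrite -dvdn_divisors // => /odd_dvd od.
  by apply/mapP=> -[e _ de]; move: od; rewrite de odd_double.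
move=> d; rewrite mem_cat -!dvdn_divisors ?double_gt0 //.
have [od | ed] := boolP (odd d).
  have -> : d \in [seq d.*2 | d <- divisors i] = false.
    by apply/mapP=> -[e _ de]; move: od; rewrite de odd_double.
  by rewrite /= -muln2 Gauss_dvdl // coprimen2.
have /negPf -> : ~~ (d %| i) by apply: contra ed => /odd_dvd.
rewrite orbF -[d]odd_double_half (negPf ed) add0n mem_map; last exact: double_inj.
by rewrite -dvdn_divisors // -!muln2 dvdn_pmul2r.
Qed.

Lemma dvdn_partn pi d m : pi.-nat d -> 0 < m -> (d %| m`_pi) = (d %| m).
Proof.
move=> pi_d m_gt0; apply/idP/idP => [dvd_d_mpi | dvd_dm].
  exact: dvdn_trans dvd_d_mpi (dvdn_part _ _).
by rewrite -(part_pnat_id pi_d) partn_dvd.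
Qed.

Lemma odd_part_partn M : 0 < M -> odd_part M = M`_2^'.
Proof.
move=> M_gt0; apply/eqP; rewrite eqn_leq; apply/andP; split.
  apply/bigmax_leqP => d /andP[od dvd_dM].
  by apply: dvdn_leq (part_gt0 _ _) _; rewrite dvdn_partn // -odd_2'nat.
have Mpi_lt : M`_2^' < M.+1 by rewrite ltnS dvdn_leq ?dvdn_part.
apply: (@leq_bigmax_cond _ _ (fun d : 'I_M.+1 => nat_of_ord d) (Ordinal Mpi_lt)).
by rewrite /= odd_2'nat part_pnat dvdn_part.
Qed.

Lemma prod_partn pi n : \prod_(1 <= m < n.+1) m`_pi = (n`!)`_pi.
Proof.
elim: n => [|n IHn]; first by rewrite big_nil partn1.
by rewrite big_nat_recr //= IHn factS partnM ?fact_gt0 // mulnC.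
Qed.

Lemma count_multiples n d : 0 < d -> count (dvdn d) (index_iota 1 n.+1) = n %/ d.
Proof.
move=> d_gt0; elim: n => [|n IHn]; first by rewrite div0n.
have -> : index_iota 1 n.+2 = index_iota 1 n.+1 ++ [:: n.+1].
  by rewrite /index_iota !subSS !subn0 -{1}[n.+1]addn1 iotaD add1n.
by rewrite count_cat IHn /= divnS // addn0 addnC.
Qed.

Lemma mem_bseqs k m s : size s <= k -> all (leq^~ m) s -> s \in bseqs k m.
Proof.
elim: k s => [|k IHk] [|x s] // size_sk /andP[x_le_m s_le_m].
rewrite in_cons; apply/orP; right; apply/allpairsPdep.
by exists x, s; rewrite mem_iota add0n ltnS x_le_m IHk.
Qed.

Lemma odd_partition_part_leq n l x : is_odd_partition n l -> x \in l -> x <= n.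
Proof.
case/and3P=> _ _ /eqP <-; elim: l => //= y l IHl.
by rewrite inE => /predU1P[-> | /IHl]; lia.
Qed.

Lemma size_leq_sumn l :
  all odd l -> size l <= sumn l ?= iff (l == nseq (size l) 1).
Proof.
elim: l => //= x l IHl /andP[ox /IHl[size_le_sum eq_ones]].
split; first by case: x ox; lia.
rewrite eqseq_cons -eq_ones; case: x ox => // -[|x] //= _.
by apply/negbTE; lia.
Qed.

Lemma mem_odd_partitions n l : (l \in odd_partitions n) = is_odd_partition n l.
Proof.
rewrite mem_filter andb_idr // => lP; rewrite mem_undup.
apply: mem_bseqs; last by apply/allP => x; apply: odd_partition_part_leq.
by case/and3P: lP => _ /size_leq_sumn[size_le_sum _] /eqP <-.
Qed.

Lemma odd_partitions_uniq n : uniq (odd_partitions n).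
Proof. by rewrite filter_uniq ?undup_uniq. Qed.

Lemma odd_partition_size_ltn n l :
  is_odd_partition n l -> l != nseq n 1 -> size l < n.
Proof.
case/and3P=> _ /size_leq_sumn[size_le_sum eq_ones] /eqP sum_n l_ne1.
rewrite ltn_neqAle -sum_n size_le_sum andbT eq_ones.
by apply: contra l_ne1 => /eqP ones; rewrite -sum_n ones sumn_nseq mul1n.
Qed.

Lemma count_dvdn_mul_leq d l : all (leq 1) l -> count (dvdn d) l * d <= sumn l.
Proof.
elim: l => //= x l IHl /andP[x_gt0 /IHl]; rewrite mulnDl.
by case dvd_dx: (d %| x) => /=; [have := dvdn_leq x_gt0 dvd_dx | ]; lia.
Qed.

Lemma count_dvdn_leq n l d :
  is_odd_partition n l -> 0 < d -> count (dvdn d) l <= n %/ d.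
Proof.
case/and3P=> _ odd_l /eqP <- d_gt0; rewrite leq_divRL //.
by apply: count_dvdn_mul_leq; apply: sub_all odd_l => -[].
Qed.

Lemma sum_count_mem N (P : pred nat) s : all (leq^~ N) s ->
  \sum_(i < N.+1 | P i) count_mem (i : nat) s = count P s.
Proof.
elim: s => [|x s IHs] /=; first by rewrite big1.
case/andP=> x_le_N /IHs <-; rewrite big_split /=; congr (_ + _).
rewrite big_mkcond (bigD1 (Ordinal (x_le_N : x < N.+1))) //= eqxx.
rewrite big1 ?addn0 => [|i]; first by case: (P x).
by rewrite -val_eqE /= eq_sym => /negPf ->; case: (P i).
Qed.

Definition block_partition n d := nseq (n %/ d) d ++ nseq (n %% d) 1.

Lemma sorted_geq_nseq_cat k d s :
  sorted geq s -> all (leq^~ d) s -> sorted geq (nseq k d ++ s).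
Proof.
move=> sorted_s s_le_d; elim: k => //= k IHk.
rewrite (path_sortedE (rev_trans leq_trans)) IHk andbT.
by rewrite all_cat all_nseq s_le_d leqnn orbT.
Qed.

Lemma block_partition_odd n d : odd d -> is_odd_partition n (block_partition n d).
Proof.
move=> od; have d_gt0 : 0 < d by case: d od.
apply/and3P; split.
- apply: sorted_geq_nseq_cat; last by rewrite all_nseq d_gt0 orbT.
  by rewrite -[nseq _ 1]cats0; apply: sorted_geq_nseq_cat.
- by rewrite all_cat !all_nseq od !orbT.
- by rewrite sumn_cat !sumn_nseq mul1n mulnC -divn_eq.
Qed.

Lemma ones_odd_partition n : is_odd_partition n (nseq n 1).
Proof.
have := block_partition_odd n (isT : odd 1).
by rewrite /block_partition divn1 modn1 cats0.
Qed.

Lemma count_dvdn_block_partition n d :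
  odd d -> count (dvdn d) (block_partition n d) = n %/ d.
Proof.
move=> od; rewrite count_cat !count_nseq dvdnn dvdn1 mul1n.
by case: eqP => [-> | _]; rewrite ?modn1 ?muln0 ?mul0n addn0.
Qed.

Local Open Scope ring_scope.

Lemma prim_root_order_inj (R : nzRingType) (z : R) m k :
  m.-primitive_root z -> k.-primitive_root z -> m = k.
Proof.
move=> prim_m prim_k; apply/eqP; rewrite eqn_dvd.
rewrite (prim_order_dvd prim_m) (prim_order_dvd prim_k).
by rewrite (prim_expr_order prim_m) (prim_expr_order prim_k) eqxx.
Qed.

Section Multiplicity.

Variable F : fieldType.
Implicit Types (z : F) (p q : {poly F}).

Lemma mup_dvdp z p q : q != 0 -> p %| q -> (mup z p <= mup z q)%N.
Proof.
move=> q_neq0 dvd_pq; have p_neq0 : p != 0.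
  by apply: contraNneq q_neq0 => p0; move: dvd_pq; rewrite p0 dvd0p.
by rewrite mup_geq //; apply: dvdp_trans dvd_pq; rewrite -mup_geq.
Qed.

Lemma mupX z p k : p != 0 -> mup z (p ^+ k) = (k * mup z p)%N.
Proof.
move=> p_neq0; elim: k => [|k IHk]; first by rewrite expr0 mupNroot ?root1.
by rewrite exprS mupM ?expf_neq0 // IHk mulSn.
Qed.

Lemma mup_prod z I r (P : pred I) (G : I -> {poly F}) :
  (forall i, P i -> G i != 0) ->
  mup z (\prod_(i <- r | P i) G i) = (\sum_(i <- r | P i) mup z (G i))%N.
Proof.
move=> G_neq0; elim: r => [|i r IHr]; first by rewrite !big_nil mupNroot ?root1.
rewrite !big_cons; case: ifP => // Pi.
rewrite mupM ?IHr ?G_neq0 //.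
apply: (big_ind (fun p => p != 0)) => // [|p1 p2]; first exact: oner_neq0.
exact: mulf_neq0.
Qed.

End Multiplicity.

Lemma dvdp_mup (F : closedFieldType) (p q : {poly F}) : p != 0 -> q != 0 ->
  (forall z, mup z p <= mup z q)%N -> p %| q.
Proof.
move=> p_neq0 q_neq0 mup_le; have [r def_p] := closed_field_poly_normal p.
rewrite def_p dvdpZl ?lead_coef_eq0 //.
have {mup_le} : forall z, (count_mem z r <= mup z q)%N.
  move=> z; rewrite -mu_prod_XsubC; apply: leq_trans (mup_le z).
  by rewrite [in X in (_ <= X)%N]def_p -mul_polyC mupMr // rootC lead_coef_eq0.
elim: r q q_neq0 {def_p} => [|x r IHr] q q_neq0 count_le.
  by rewrite big_nil dvd1p.
have /dvdpP[q' def_q] : 'X - x%:P %| q.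
  by rewrite XsubC_dvd //; apply: leq_trans (count_le x); rewrite /= eqxx.
have q'_neq0 : q' != 0 by apply: contraNneq q_neq0 => q'0; rewrite def_q q'0 mul0r.
rewrite def_q big_cons mulrC dvdp_mul2r ?polyXsubC_eq0 //; apply: IHr => // z.
have := count_le z; rewrite def_q mupM ?polyXsubC_eq0 //.
rewrite -['X - x%:P]expr1 mup_XsubCX /=.
by case: (x == z) => /=; lia.
Qed.

Lemma dvdp_map_unit_lead (R : idomainType) (F : fieldType)
    (f : {rmorphism R -> F}) (g p : {poly R}) :
  injective f -> lead_coef g \is a GRing.unit ->
  map_poly f g %| map_poly f p -> exists q, p = q * g.
Proof.
(* Dividing by g is exact; the image of the remainder is a multiple of f(g)
   of smaller size, hence 0. *)
move=> inj_f unit_g dvd_fg_fp; exists (p %/ g).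
have def_p := Pdiv.IdomainUnit.divp_eq unit_g p.
suff mod_eq0 : p %% g = 0 by rewrite {1}def_p mod_eq0 addr0.
have g_neq0 : g != 0 by apply: contraTneq unit_g => ->; rewrite lead_coef0 unitr0.
have size_f := size_map_inj_poly inj_f (rmorph0 f).
apply/eqP; rewrite -size_poly_eq0 -size_f size_poly_eq0.
apply: contraTT (ltn_modpN0 p g_neq0) => r_neq0; rewrite -leqNgt -!size_f.
apply: dvdp_leq r_neq0 _.
by move: dvd_fg_fp; rewrite {1}def_p rmorphD rmorphM /= dvdp_addr // dvdp_mull.
Qed.

Definition Psi (d : nat) : {poly int} := 'Phi_(d.*2).

Lemma onepXn_Psi i : odd i -> 1 + 'X^i = \prod_(d <- divisors i) Psi d.
Proof.
move=> oi; have i_gt0 : (0 < i)%N by case: i oi.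
have Xi1_neq0 : 'X^i - 1 != 0 :> {poly int} by rewrite -size_poly_eq0 size_XnsubC.
(* X^(2i) - 1 = (1 + X^i)(X^i - 1), and the divisors of 2i are those of i
   and their doubles. *)
apply: (mulIf Xi1_neq0); have := @prod_Cyclotomic i.*2.
rewrite double_gt0 (perm_big _ (perm_divisors_double oi)) big_cat big_map /=.
by rewrite prod_Cyclotomic // -muln2 exprM /Psi => /(_ i_gt0) ->; ring.
Qed.

Lemma Psi1 : Psi 1 = 1 + 'X.
Proof. by rewrite (onepXn_Psi (erefl : odd 1)) big_seq1. Qed.

Lemma onepXn_odd_factor i : odd i ->
  1 + 'X^i = (1 + 'X) * \sum_(k < i) 'X^(i.-1 - k) * (- 1) ^+ k :> {poly int}.
Proof.
move=> oi; have := subrXX 'X (-1 : {poly int}) i.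
by rewrite -signr_odd oi expr1 opprK addrC => ->; rewrite addrC.
Qed.

Lemma prod_Psi_neg1 i : odd i ->
  \prod_(d <- divisors i | d != 1%N) (Psi d).[-1] = i%:Z.
Proof.
move=> oi; have i_gt0 : (0 < i)%N by case: i oi.
have onepX_neq0 : 1 + 'X != 0 :> {poly int} by rewrite -size_poly_eq0 addrC size_XaddC.
have := onepXn_Psi oi; rewrite (bigD1_seq 1%N) ?divisor1 ?divisors_uniq //= Psi1.
rewrite onepXn_odd_factor // -horner_prod => /(mulfI onepX_neq0) <-.
rewrite horner_sum (eq_bigr (fun _ => 1)) ?sumr_const ?card_ord ?natz // => k _.
rewrite hornerM hornerXn !hornerE -exprD subnK; last by rewrite -ltnS prednK.
by rewrite -signr_odd; case: i oi {i_gt0 k} => //= j /negPf ->.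
Qed.

Definition Psi_prod n (e : nat -> nat) : {poly int} :=
  \prod_(d < n.+1 | odd d) Psi d ^+ e d.

Lemma Psi_prodD n e1 e2 :
  Psi_prod n (fun d => e1 d + e2 d)%N = Psi_prod n e1 * Psi_prod n e2.
Proof. by rewrite -big_split; apply: eq_bigr => d _; rewrite exprD. Qed.

Lemma eq_Psi_prod n e1 e2 :
  (forall d, odd d -> d <= n -> e1 d = e2 d)%N -> Psi_prod n e1 = Psi_prod n e2.
Proof. by move=> e12; apply: eq_bigr => d od; rewrite e12 // -ltnS. Qed.

Lemma Psi_prod_monic n e : Psi_prod n e \is monic.
Proof. by apply: monic_prod => d _; apply/monic_exp/Cyclotomic_monic. Qed.

Lemma h_O_Psi_prod n l : h_O n l = Psi_prod n (fun d =>
  \sum_(i < n.+1 | odd i && (d %| i)) (n %/ i - count_mem (i : nat) l))%N.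
Proof.
rewrite /h_O; under eq_bigr => i oi.
  rewrite onepXn_Psi // (big_divisors_ord _ _ _ (N := n.+1)) /=; last first.
    by rewrite ltn_ord andbT; case: (nat_of_ord i) oi.
  rewrite -prodrXl; over.
rewrite (exchange_big_dep (fun d : 'I_n.+1 => odd d)) /= => [|i d oi /dvdn_odd].
  by apply: eq_bigr => d od; rewrite prodrXr.
exact.
Qed.

(* The exponent of Psi d in h_O n l is G_exp n d + num_exp n l d, and
   num_exp n l d vanishes for l = block_partition n d: G_exp n d is the least
   exponent of Psi d over all odd partitions of n. *)
Definition G_exp n d := (\sum_(i < n.+1 | odd i && (d %| i)) n %/ i - n %/ d)%N.

Definition num_exp n l d := (n %/ d - count (dvdn d) l)%N.

Definition G_poly n := Psi_prod n (G_exp n).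

Lemma h_O_factor n l : is_odd_partition n l ->
  h_O n l = Psi_prod n (num_exp n l) * G_poly n.
Proof.
move=> lP; rewrite h_O_Psi_prod /G_poly -Psi_prodD.
apply: eq_Psi_prod => d od d_le_n.
have d_gt0 : (0 < d)%N by case: d od {d_le_n}.
have count_le := count_dvdn_leq lP d_gt0.
have sum_ge : (n %/ d <= \sum_(i < n.+1 | odd i && (d %| i)) n %/ i)%N.
  by rewrite (bigD1 (Ordinal (d_le_n : d < n.+1)%N)) /= ?od ?dvdnn ?leq_addr.
rewrite sumnB => [|i /andP[oi _]]; last first.
  apply: leq_trans (count_dvdn_leq lP _); last by case: (nat_of_ord i) oi.
  by apply: sub_count => x /eqP ->.
rewrite (sum_count_mem (fun i => odd i && (d %| i)%N)); last first.
  by apply/allP => x; apply: odd_partition_part_leq lP.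
rewrite (eq_in_count (a2 := dvdn d)) => [|x x_in_l].
  by rewrite /num_exp /G_exp addnC addnBA // subnK.
by case/and3P: lP => _ /allP/(_ x x_in_l) -> _.
Qed.

Local Notation toC := (map_poly (intr : int -> algC)).

Lemma toC_eq0 p : (toC p == 0) = (p == 0).
Proof. by rewrite -!size_poly_eq0 size_map_inj_poly ?rmorph0 //; apply: intr_inj. Qed.

Lemma toC_Psi_neq0 d : toC (Psi d) != 0.
Proof. by rewrite toC_eq0 monic_neq0 ?Cyclotomic_monic. Qed.

Lemma root_Psi d z : (0 < d)%N -> root (toC (Psi d)) z = (d.*2).-primitive_root z.
Proof.
rewrite -double_gt0 => d2_gt0; have [w prim_w] := C_prim_root_exists d2_gt0.
by rewrite /Psi (Cintr_Cyclotomic prim_w) root_cyclotomic.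
Qed.

Lemma Psi_root_inj d1 d2 z : (0 < d1)%N -> (0 < d2)%N ->
  root (toC (Psi d1)) z -> root (toC (Psi d2)) z -> d1 = d2.
Proof.
move=> d1_gt0 d2_gt0; rewrite !root_Psi //.
by move=> /prim_root_order_inj eq_d /eq_d /double_inj.
Qed.

Lemma mup_Psi_prod_le n (e1 e2 : nat -> nat) z :
  (forall d : 'I_n.+1, odd d -> root (toC (Psi d)) z -> e1 d <= e2 d)%N ->
  (mup z (toC (Psi_prod n e1)) <= mup z (toC (Psi_prod n e2)))%N.
Proof.
move=> le_e12; rewrite !rmorph_prod !mup_prod => [|d _|d _]; last 2 first.
- by rewrite rmorphXn expf_neq0 ?toC_Psi_neq0.
- by rewrite rmorphXn expf_neq0 ?toC_Psi_neq0.
apply: leq_sum => d od; rewrite !rmorphXn !mupX ?toC_Psi_neq0 //.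
have [root_dz | /mupNroot ->] := boolP (root (toC (Psi d)) z); last by rewrite !muln0.
by rewrite leq_mul2r le_e12 ?orbT.
Qed.

(* Distinct Psi d have disjoint complex roots (primitive roots of distinct
   orders), so at a root of Psi d only the exponent of Psi d counts. *)
Lemma exists_h_O_mup_leq n z : exists2 l, is_odd_partition n l &
  (mup z (toC (h_O n l)) <= mup z (toC (G_poly n)))%N.
Proof.
have [d /andP[od root_dz] | no_root] :=
  pickP (fun d : 'I_n.+1 => odd d && root (toC (Psi d)) z).
  exists (block_partition n d); first exact: block_partition_odd.
  rewrite h_O_factor ?block_partition_odd // /G_poly -Psi_prodD.
  apply: mup_Psi_prod_le => d' od' root_d'z.
  have d_gt0 : (0 < d)%N by case: (nat_of_ord d) od.
  have d'_gt0 : (0 < d')%N by case: (nat_of_ord d') od'.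
  have -> : d' = d by apply/val_inj/(Psi_root_inj d'_gt0 d_gt0 root_d'z root_dz).
  by rewrite /num_exp count_dvdn_block_partition // subnn.
exists (nseq n 1); first exact: ones_odd_partition.
rewrite h_O_factor ?ones_odd_partition // /G_poly -Psi_prodD.
by apply: mup_Psi_prod_le => d od root_dz; have := no_root d; rewrite od root_dz.
Qed.

Lemma h_O_monic n l : h_O n l \is monic.
Proof. by rewrite h_O_Psi_prod Psi_prod_monic. Qed.

Lemma dvd_G_poly n g :
  (forall l, l \in odd_partitions n -> dvdZX g (h_O n l)) -> dvdZX g (G_poly n).
Proof.
move=> dvd_g_h; have [q def_h] : dvdZX g (h_O n (nseq n 1)).
  by apply: dvd_g_h; rewrite mem_odd_partitions ones_odd_partition.
have unit_g : lead_coef g \is a GRing.unit.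
  apply/unitrPr; exists (lead_coef q).
  by rewrite mulrC -lead_coefM -def_h (monicP (h_O_monic _ _)).
have g_neq0 : g != 0 by apply: contraTneq unit_g => ->; rewrite lead_coef0 unitr0.
apply: (dvdp_map_unit_lead (@intr_inj algC)) unit_g _.
apply: dvdp_mup => [||z]; first by rewrite toC_eq0.
  by rewrite toC_eq0 monic_neq0 ?Psi_prod_monic.
have [l lP mup_le] := exists_h_O_mup_leq n z; apply: leq_trans mup_le.
have [q' def_h'] : dvdZX g (h_O n l) by apply: dvd_g_h; rewrite mem_odd_partitions.
apply: mup_dvdp; first by rewrite toC_eq0 monic_neq0 ?h_O_monic.
by rewrite def_h' rmorphM dvdp_mull.
Qed.

Lemma G_poly_is_G_O n : is_G_O n (G_poly n).
Proof.
split; last by rewrite (monicP (Psi_prod_monic _ _)).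
  by move=> l; rewrite mem_odd_partitions => /h_O_factor ->; eexists.
exact: dvd_G_poly.
Qed.

Lemma dvdZX_antisym p q : p != 0 -> dvdZX p q -> dvdZX q p ->
  0 < lead_coef p -> 0 < lead_coef q -> p = q.
Proof.
move=> p_neq0 [a def_q] [b def_p] lc_p_gt0.
have ba1 : b * a = 1 by apply: (mulIf p_neq0); rewrite mul1r -mulrA -def_q -def_p.
have : a \is a GRing.unit by apply/unitrPr; exists b; rewrite mulrC.
rewrite poly_unitE => /andP[/eqP/eq_leq/size1_polyC def_a unit_a0].
rewrite def_q def_a lead_coefM lead_coefC.
have /orP[/eqP -> _ | /eqP ->] : (a`_0 == 1) || (a`_0 == -1) := unit_a0.
  by rewrite mul1r.
by rewrite mulN1r oppr_gt0 ltNge (ltW lc_p_gt0).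
Qed.

Lemma G_O_eq n : G_O n = G_poly n.
Proof.
have [dvd_P_h dvd_h_P lc_P] := G_poly_is_G_O n.
have [dvd_G_h dvd_h_G lc_G] : is_G_O n (G_O n).
  by apply: epsilon_spec; exists (G_poly n); apply: G_poly_is_G_O.
apply: dvdZX_antisym => //; last 2 first.
- exact: dvd_h_P dvd_G_h.
- exact: dvd_h_G dvd_P_h.
by apply: contraTneq lc_G => ->; rewrite lead_coef0 ltxx.
Qed.

Lemma num_O_eq n :
  num_O n = \sum_(l <- odd_partitions n) Psi_prod n (num_exp n l).
Proof.
set num := \sum_(l <- _) _.
have G_neq0 : G_O n != 0 by rewrite G_O_eq monic_neq0 ?Psi_prod_monic.
have sum_h_eq : sum_h_O n = num * G_O n.
  rewrite G_O_eq /sum_h_O mulr_suml !big_seq; apply: eq_bigr => l.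
  by rewrite mem_odd_partitions => /h_O_factor.
have num_O_spec : sum_h_O n = num_O n * G_O n.
  exact: (epsilon_spec _ (fun q => sum_h_O n = q * G_O n) (ex_intro _ _ sum_h_eq)).
by apply: (mulIf G_neq0); rewrite -num_O_spec.
Qed.

Lemma Psi_prod_neg1_eq0 n e :
  (0 < n)%N -> (0 < e 1%N)%N -> (Psi_prod n e).[-1] = 0.
Proof.
move=> n_gt0 e1_gt0; have one_lt : (1 < n.+1)%N by rewrite ltnS.
rewrite horner_prod (bigD1 (Ordinal one_lt)) //= horner_exp Psi1 !hornerE addrN.
by rewrite expr0n eqn0Ngt e1_gt0 mul0r.
Qed.

Lemma num_exp1 n l : num_exp n l 1 = (n - size l)%N.
Proof.
by rewrite /num_exp divn1 (eq_count (a2 := predT)) ?count_predT // => x; rewrite /= dvd1n.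
Qed.

Lemma prod_Psi_neg1_dvdn N m : (0 < m < N)%N ->
  \prod_(d < N | (odd d && (d != 1%N :> nat)) && (d %| m)%N) (Psi d).[-1] =
  ((m`_2^')%N)%:Z.
Proof.
case/andP=> m_gt0 m_lt_N; have mpi_lt_N : (m`_2^' < N)%N.
  by apply: leq_ltn_trans m_lt_N; rewrite dvdn_leq ?dvdn_part.
have odd_mpi : odd (m`_2^')%N by rewrite odd_2'nat part_pnat.
rewrite -prod_Psi_neg1 // (big_divisors_ord _ _ _ (N := N)) ?part_gt0 //.
apply: eq_bigl => d; rewrite -andbA andbCA; congr (_ && _).
have [od | ed] := boolP (odd d); first by rewrite dvdn_partn // -odd_2'nat.
by apply/esym/negbTE; apply: contra ed => /dvdn_odd; apply.
Qed.

Lemma Psi_prod_ones_neg1 n :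
  (Psi_prod n (num_exp n (nseq n 1))).[-1] = (((n`!)`_2^')%N)%:Z.
Proof.
rewrite horner_prod.
transitivity (\prod_(d < n.+1 | odd d && (d != 1%N :> nat))
                \prod_(m <- index_iota 1 n.+1 | (d %| m)%N) (Psi d).[-1]).
  rewrite [RHS]big_mkcond [LHS]big_mkcond; apply: eq_bigr => d _.
  rewrite horner_exp /num_exp count_nseq dvdn1 big_const_seq iter_mulr_1.
  case od: (odd d) => //=; have [-> | d_ne1] := eqVneq (d : nat) 1%N.
    by rewrite divn1 mul1n subnn.
  by rewrite mul0n subn0 count_multiples //; case: (nat_of_ord d) od.
rewrite (exchange_big_dep (fun _ => true)) //= -natz -prod_partn natr_prod.
rewrite big_seq [RHS]big_seq; apply: eq_bigr => m; rewrite mem_index_iota => m_range.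
by rewrite prod_Psi_neg1_dvdn ?natz.
Qed.

Theorem theorem3 (n : nat) : (1 <= n)%N ->
  (num_O n).[-1] = ((odd_part n`!)%:Z : int).
Proof.
move=> n_gt0; have ones_mem : nseq n 1 \in odd_partitions n.
  by rewrite mem_odd_partitions ones_odd_partition.
rewrite num_O_eq horner_sum (bigD1_seq _ ones_mem (odd_partitions_uniq n)) /=.
rewrite Psi_prod_ones_neg1 odd_part_partn ?fact_gt0 // big1_seq ?addr0 //.
move=> l /andP[l_ne1]; rewrite mem_odd_partitions => lP.
by rewrite Psi_prod_neg1_eq0 // num_exp1 subn_gt0 odd_partition_size_ltn.
Qed.
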